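(* Let $N, T, L \ge 1$ be integers, let $P = \lfloor T/L \rfloor \ge 1$ and $\bar{P} = N P$. Let $f = (f_1,\dots,f_N)$ with each $f_n:\mathbb{Z}\to\mathbb{R}$ be an order-$(K, R_{\max})$ multivariate LRF, i.e. there exist $K \ge 1$, vectors $\theta_n \in \mathbb{R}^K$ ($n \in [N]$), and functions $h_1,\dots,h_K:\mathbb{Z}\to\mathbb{R}$ such that $f_n(t) = \sum_{k=1}^K (\theta_n)_k h_k(t)$ for all $n\in[N]$ and $t$, where each $h_k$ is an order-$R_k$ LRF with $R_k \le R_{\max}$. Let $\boldsymbol{M}^f \in \mathbb{R}^{L\times \bar{P}}$ be the stacked Page matrix of $f$, defined by $M^f_{i,\, j + P(n-1)} = f_n(i + (j-1)L)$ for $i\in[L]$, $j\in[P]$, $n\in[N]$. Then $\operatorname{rank}(\boldsymbol{M}^f) \le K \cdot R_{\max}$.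
   Context: $[m] := \{1,\dots,m\}$. A function $h:\mathbb{Z}\to\mathbb{R}$ is called an order-$R$ (univariate) linear recurrent formula (LRF) (relative to the horizon $T$) if there exist functions $g_r, \tilde h_r : \mathbb{Z}\to\mathbb{R}$, $r\in[R]$, such that $h(i+j) = \sum_{r=1}^R g_r(i)\,\tilde h_r(j)$ for all integers $i, j \ge 0$ with $i + j \le T$. *)

From HB Require Import structures.
From mathcomp Require Import all_boot all_order all_algebra.
Set Implicit Arguments. Unset Strict Implicit. Unset Printing Implicit Defensive.
Import Order.TTheory GRing.Theory Num.Theory.
Local Open Scope ring_scope.

Definition is_LRF (R : ringType) (T Rord : nat) (h : int -> R) : Prop :=
  exists (g ht : 'I_Rord -> int -> R),
    forall i j : nat, (i + j <= T)%N ->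
      h (i + j)%:Z = \sum_(r < Rord) g r i%:Z * ht r j%:Z.

(* Page matrix of g with L rows and P columns (0-based indices):
   entry (i, j) = g((i+1) + j L), i.e. the 1-based entry (i, j) is g(i + (j-1)L). *)
Definition page_mx (R : ringType) (L P : nat) (g : int -> R) : 'M[R]_(L, P) :=
  \matrix_(i < L, j < P) g (i.+1 + j * L)%N%:Z.

(* Stacked Page matrix: the column blocks page_mx (f n), n = 0..N-1, side by side,
   so that column j + P n (0-based) holds f_n at times (i+1) + j L. *)
Definition stacked_page_mx (R : ringType) (N L P : nat) (f : 'I_N -> int -> R)
  : 'M[R]_(L, \sum_(n < N) P) :=
  \mxrow_(n < N) page_mx L P (f n).

From HB Require Import structures.
From mathcomp Require Import all_boot all_order all_algebra.
From mathcomp Require Import zify.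
Set Implicit Arguments. Unset Strict Implicit. Unset Printing Implicit Defensive.
Import Order.TTheory GRing.Theory Num.Theory.
Local Open Scope ring_scope.

(** An LRF [h] of order [r] factors every Page matrix that fits in the
    horizon through [r] columns:
    [h (i.+1 + j L) = \sum_s ht_s (i.+1) g_s (j L)].  The stacked Page matrix
    of [f_n = \sum_k theta_n,k h_k] is the sum over [k] of the blocks
    [theta_n,k *: page_mx (h k)], whose column spaces lie in that of
    [page_mx (h k)]; so its rank is at most [\sum_k R_k <= K Rmax]. *)

Lemma mxrank_sum_le (F : fieldType) (m n : nat) (I : Type) (r : seq I)
    (P : pred I) (A : I -> 'M[F]_(m, n)) :
  (\rank (\sum_(i <- r | P i) A i)%R <= \sum_(i <- r | P i) \rank (A i))%N.
Proof.
apply: (big_rec2 (fun B b => \rank B <= b)%N) => [|i B b _ leBb].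
  by rewrite mxrank0.
exact: leq_trans (mxrank_add _ _) (leq_add (leqnn _) leBb).
Qed.

Lemma mxrow_scale (R : comPzRingType) (N m p : nat) (c : 'I_N -> R)
    (M : 'M[R]_(m, p)) :
  \mxrow_(n < N) (c n *: M) = M *m \mxrow_(n < N) (c n)%:M.
Proof. by rewrite mul_mxrow; apply: eq_mxrow => n; rewrite mul_mx_scalar. Qed.

Lemma mxrank_mxrow_scale (F : fieldType) (N m p : nat) (c : 'I_N -> F)
    (M : 'M[F]_(m, p)) :
  (\rank (\mxrow_(n < N) (c n *: M)) <= \rank M)%N.
Proof. by rewrite mxrow_scale mxrankM_maxl. Qed.

Lemma page_mx_lincomb (R : nzRingType) (K L P : nat) (c : 'I_K -> R)
    (h : 'I_K -> int -> R) :
  page_mx L P (fun t => \sum_(k < K) c k * h k t)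
  = \sum_(k < K) c k *: page_mx L P (h k).
Proof.
by apply/matrixP => i j; rewrite summxE mxE; apply: eq_bigr => k _; rewrite !mxE.
Qed.

Lemma stacked_page_mx_lincomb (R : nzRingType) (N K L P : nat)
    (c : 'I_N -> 'I_K -> R) (h : 'I_K -> int -> R) (f : 'I_N -> int -> R) :
  (forall n t, f n t = \sum_(k < K) c n k * h k t) ->
  stacked_page_mx L P f
  = \sum_(k < K) \mxrow_(n < N) (c n k *: page_mx L P (h k)).
Proof.
move=> hf; rewrite /stacked_page_mx -mxrow_sum; apply: eq_mxrow => n.
by rewrite -page_mx_lincomb; apply/matrixP => i j; rewrite !mxE hf.
Qed.

Lemma page_mx_LRF_factor (R : comNzRingType) (T r L P : nat) (h : int -> R) :
  (P * L <= T)%N -> is_LRF T r h ->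
  exists (A : 'M[R]_(L, r)) (B : 'M[R]_(r, P)), page_mx L P h = A *m B.
Proof.
move=> lePL_T [g [ht hLRF]].
exists (\matrix_(i < L, s < r) ht s i.+1%:Z).
exists (\matrix_(s < r, j < P) g s (j * L)%N%:Z).
apply/matrixP => i j; rewrite !mxE addnC hLRF.
  by apply: eq_bigr => s _; rewrite !mxE mulrC.
have leiL := ltn_ord i; have lejP := ltn_ord j.
have : (j.+1 * L <= P * L)%N by rewrite leq_mul2r lejP orbT.
lia.
Qed.

Lemma mxrank_page_mx_LRF (F : fieldType) (T r L P : nat) (h : int -> F) :
  (P * L <= T)%N -> is_LRF T r h -> (\rank (page_mx L P h) <= r)%N.
Proof.
move=> lePL_T /(page_mx_LRF_factor lePL_T) [A [B ->]].
exact: leq_trans (mxrankM_maxl A B) (rank_leq_col A).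
Qed.

Theorem proposition3p2 (R : realFieldType) (N T L : nat)
  (hN : (1 <= N)%N) (hT : (1 <= T)%N) (hL : (1 <= L)%N)
  (hP : (1 <= T %/ L)%N)
  (K Rmax : nat) (hK : (1 <= K)%N)
  (theta : 'I_N -> 'rV[R]_K) (h : 'I_K -> int -> R) (Rk : 'I_K -> nat)
  (hRk : forall k, (Rk k <= Rmax)%N)
  (hLRF : forall k, is_LRF T (Rk k) (h k))
  (f : 'I_N -> int -> R)
  (hf : forall n t, f n t = \sum_(k < K) theta n 0 k * h k t) :
  (\rank (stacked_page_mx L (T %/ L) f) <= K * Rmax)%N.
Proof.
rewrite (stacked_page_mx_lincomb _ _ hf).
apply: leq_trans (mxrank_sum_le _ _ _) _.
rewrite -[K in (_ <= K * _)%N]card_ord -sum_nat_const.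
apply: leq_sum => k _.
apply: leq_trans (mxrank_mxrow_scale _ _) _.
apply: leq_trans (hRk k).
exact: mxrank_page_mx_LRF (leq_trunc_div T L) (hLRF k).
Qed.
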